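(* Assume the setting in the context, with $\delta=0$ (so $y>0$ and $\theta>0$). Set $A_m=\lfloor z_0/\theta\rfloor$. Write $y_0=\overline{y_0}\,y+\widehat{y_0}$ and $h=\overline{h}\,y+\widehat{h}$ with $0\le \widehat{y_0},\widehat{h}<y$; when $w>0$ also write $x_0=\overline{x_0}\,w+\widehat{x_0}$ and $l=\overline{l}\,w+\widehat{l}$ with $0\le\widehat{x_0},\widehat{l}<w$. (i.1) If $w=0$, then $$d(m,T)=(1+A_m)(1+A_m+\overline{y_0})+(\overline{h}-2)\frac{A_m(1+A_m)}{2}+\sum_{k=0}^{A_m}\left\lfloor\frac{\widehat{y_0}+k\widehat{h}}{y}\right\rfloor. \quad ( * )$$ (i.2) If $w>0$, set $k_0=\left\lceil\frac{z_0w-x_0\theta}{b}\right\rceil$ (then $k_0\ge 0$). (i.2.1) If $k_0=0$, then $d(m,T)$ is given by $( * )$. (i.2.2) If $1\le k_0\le A_m$, then $$d(m,T)=(1+A_m)(1+A_m+\overline{y_0})+k_0(\overline{x_0}-A_m)+(\overline{h}-2)\frac{A_m(1+A_m)}2+\overline{l}\frac{(k_0-1)k_0}{2}+\sum_{k=0}^{A_m}\left\lfloor\frac{\widehat{y_0}+k\widehat{h}}{y}\right\rfloor+\sum_{k=0}^{k_0-1}\left\lfloor\frac{\widehat{x_0}+k\widehat{l}}{w}\right\rfloor.$$ (i.2.3) If $k_0>A_m$, then $$d(m,T)=(1+A_m)(1+\overline{x_0}+\overline{y_0})+(\overline{l}+\overline{h}-2)\frac{A_m(1+A_m)}2+\s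um_{k=0}^{A_m}\left\lfloor\frac{\widehat{x_0}+k\widehat{l}}{w}\right\rfloor+\sum_{k=0}^{A_m}\left\lfloor\frac{\widehat{y_0}+k\widehat{h}}{y}\right\rfloor.$$
   Context: Let $a<b<c$ be positive integers with $\gcd(a,b,c)=1$ and $T=\langle a,b,c\rangle=\{xa+yb+zc:x,y,z\in\mathbb N\}$. For $m\in T$, the denumerant $d(m,T)$ is the number of $(x,y,z)\in\mathbb N^3$ with $xa+yb+zc=m$. For $(i,j)\in\mathbb N^2$ let $[\![i,j]\!]=[i,i+1)\times[j,j+1)\subset\mathbb R^2$. For integers $0\le w<l$, $0\le y<h$, the L-shape $\mathrm L(l,h,w,y)$ is the set of unit squares $[\![i,j]\!]$ with $0\le i<l$, $0\le j<h$, excluding those with $i\ge l-w$ and $j\ge h-y$ (it has $lh-wy$ squares). An L-shape $\mathcal H$ is related to $T$ if it consists of exactly $c$ squares, every residue class modulo $c$ equals $ia+jb \bmod c$ for exactly one $[\![i,j]\!]\in\mathcal H$, and for each $[\![i,j]\!]\in\mathcal H$, $ia+jb=\min\{sa+tb:(s,t)\in\mathbb N^2,\ sa+tb\equiv ia+jb \pmod c\}$. Setting: $\mathcal H=\mathrm L(l,h,w,y)$ is an L-shape related to $T$, and $\delta=(la-yb)/c$, $\theta=(hb-wa)/c$; it is known that $\delta,\theta$ are nonnegative integers with $\delta+\theta>0$, $a=h\delta+y\theta$, $b=w\delta+l\theta$, $lh-wy=c$. For $m\in T$, the basic factorization of $m$ with respect to $\mathcal H$ is the unique $(x_0,y_0,z_0)\in\mathbb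 N^3$ with $x_0a+y_0b+z_0c=m$ and $[\![x_0,y_0]\!]\in\mathcal H$. Fix $m\in T$ with basic factorization $(x_0,y_0,z_0)$. *)

From HB Require Import structures.
From mathcomp Require Import all_boot all_order all_algebra.
Set Implicit Arguments. Unset Strict Implicit. Unset Printing Implicit Defensive.

(* Denumerant d(m,T) for T = <a,b,c>: number of (x,y,z) in N^3 with
   x a + y b + z c = m.  When a,b,c > 0 every solution has x,y,z <= m,
   so the count over the box [0,m]^3 is the full count. *)
Definition denumerant (a b c m : nat) : nat :=
  \sum_(x < m.+1) \sum_(y < m.+1) \sum_(z < m.+1)
     ((x * a + y * b + z * c == m) : nat).

Definition in_monoid (a b c m : nat) : Prop :=
  exists x y z : nat, x * a + y * b + z * c = m.

Definition inL (l h w y i j : nat) : bool :=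
  [&& i < l, j < h & ~~ ((l - w <= i) && (h - y <= j))].

Definition related_L (a b c l h w y : nat) : Prop :=
  [/\ l * h - w * y = c,   (* the L-shape has exactly c squares *)
      (forall r, r < c -> exists i j, [/\ inL l h w y i j, (i * a + j * b) %% c = r
         & forall i' j', inL l h w y i' j' -> (i' * a + j' * b) %% c = r -> i' = i /\ j' = j])
    & (forall i j, inL l h w y i j -> forall s t,
         s * a + t * b = i * a + j * b %[mod c] -> i * a + j * b <= s * a + t * b)].

From HB Require Import structures.
From mathcomp Require Import all_boot all_order all_algebra.
Import Order.TTheory GRing.Theory Num.Theory.
From mathcomp Require Import zify ring.

Set Implicit Arguments.
Unset Strict Implicit.
Unset Printing Implicit Defensive.

(* With delta = 0 we have a = y theta, b = l theta and c = l h - w y, so that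
   (-w, h, -theta) and (l, -y, 0) are relations of (a, b, c).  Every
   factorization of m is (x0 + i l - j w, y0 + j h - i y, z0 - j theta) for a
   unique admissible pair (j, i): minimality of the basic factorization forces
   z <= z0, coprimality of theta and c makes theta divide z0 - z, and
   coprimality of l and y (a consequence of the L-shape being related to T)
   determines i.  Counting admissible pairs column by column gives
   sum_j (floor((y0 + j h)/y) + 1) minus the pairs with x0 + i l < j w;
   counting the latter row by row gives sum_(i < k0) (A_m - floor((x0 + i l)/w)),
   where k0 is the first row lying above the line.  Splitting every floor into
   quotient and remainder parts yields one formula in k0, and the three cases
   of the theorem are its specialisations at k0 = 0, 1 <= k0 <= A_m and
   k0 = A_m + 1. *)

Lemma sum_nat_uniq n (P : pred 'I_n) :
  (forall i j, P i -> P j -> i = j) -> \sum_(i < n) P i = [exists i, P i].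
Proof.
move=> uP; case: existsP => [[i0 Pi0] | noP].
  rewrite (bigD1 i0) //= Pi0 big1 // => j ji0; apply/eqP; rewrite eqb0.
  by apply: contra ji0 => Pj; rewrite (uP _ _ Pj Pi0).
by rewrite big1 // => i _; apply/eqP; rewrite eqb0; apply/negP => Pi; apply: noP; exists i.
Qed.

Lemma sum_ord_eq M p : \sum_(X < M) (X == p :> nat) = (p < M).
Proof.
rewrite sum_nat_uniq => [|i j /eqP Ei /eqP Ej]; last by apply: ord_inj; rewrite Ei Ej.
congr nat_of_bool; apply/existsP/idP => [[X /eqP<-] | pM]; first exact: ltn_ord.
by exists (Ordinal pM).
Qed.

Lemma sum_box_point M (cnd : bool) p q r :
  \sum_(X < M) \sum_(Y < M) \sum_(Z < M)
    (cnd && (X == p :> nat) && (Y == q :> nat) && (Z == r :> nat) : nat) =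
  cnd * (p < M) * (q < M) * (r < M).
Proof.
rewrite -!sum_ord_eq -!mulnA big_distrl big_distrr; apply: eq_bigr => X _.
rewrite big_distrl !big_distrr; apply: eq_bigr => Y _.
by rewrite !big_distrr; apply: eq_bigr => Z _ /=; rewrite !mulnb !andbA.
Qed.

Lemma sum_leq_ord n U : U < n -> \sum_(i < n) (i <= U : nat) = U.+1.
Proof.
move=> Un; rewrite (eq_bigr (fun i : 'I_n => if i < U.+1 then 1 else 0)) => [|i _].
  by rewrite -big_mkcond -(big_ord_widen _ (fun=> 1) Un) sum_nat_const card_ord muln1.
by rewrite ltnS; case: (i <= U).
Qed.

Lemma sum_ltn_ord n f : \sum_(j < n.+1) (f < j : nat) = n - f.
Proof.
elim: n => [|n IHn]; first by rewrite big_ord_recr big_ord0 /=; case: f.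
by rewrite big_ord_recr /= IHn; case: (ltnP f n.+1) => /=; lia.
Qed.

Lemma sum_floor_affine n u v d :
  \sum_(j < n) ((u + j * v) %/ d) =
  n * (u %/ d) + (v %/ d) * \sum_(j < n) j + \sum_(j < n) ((u %% d + j * (v %% d)) %/ d).
Proof.
have [->|dpos] := posnP d.
  by rewrite !divn0 muln0 mul0n !big1 // => j _; rewrite divn0.
have -> : n * (u %/ d) = \sum_(j < n) u %/ d by rewrite sum_nat_const card_ord.
rewrite big_distrr -!big_split /=; apply: eq_bigr => j _.
rewrite {1}(divn_eq u d) {1}(divn_eq v d).
have -> : u %/ d * d + u %% d + j * (v %/ d * d + v %% d)
          = (u %/ d + v %/ d * j) * d + (u %% d + j * (v %% d)) by ring.
by rewrite divnMDl // addnA.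
Qed.

Lemma sum_ord_id_double n : (\sum_(i < n) i) * 2 = n.-1 * n.
Proof.
elim: n => [|n IHn]; first by rewrite big_ord0.
by rewrite big_ord_recr /= mulnDl IHn; case: n {IHn} => //= n; lia.
Qed.

Lemma sum_ord_id n : \sum_(i < n) i = (n.-1 * n) %/ 2.
Proof. by rewrite -sum_ord_id_double mulnK. Qed.

Lemma exchange_big3 n1 n2 n3 (F : 'I_n1 -> 'I_n2 -> 'I_n3 -> nat) :
  \sum_(i1 < n1) \sum_(i2 < n2) \sum_(i3 < n3) F i1 i2 i3 =
  \sum_(i2 < n2) \sum_(i3 < n3) \sum_(i1 < n1) F i1 i2 i3.
Proof. by rewrite exchange_big; apply: eq_bigr => i2 _; rewrite exchange_big. Qed.

Lemma coprime_mod_mulr_inj d k r s : coprime d k -> r < d -> s < d ->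
  r * k = s * k %[mod d] -> r = s.
Proof.
move=> cop rd sd; wlog rs : r s rd sd / r <= s => [hwlog E|].
  by case: (leqP r s) => [|/ltnW] H; [exact: hwlog | exact/esym/hwlog].
move/eqP; rewrite eq_sym eqn_mod_dvd ?leq_mul2r ?rs ?orbT // -mulnBl Gauss_dvdl //.
by rewrite /dvdn modn_small => [/eqP|]; lia.
Qed.

Lemma sum_ltn_affine_swap A B K x0 l w : K <= B ->
  (forall i, i < K -> x0 + i * l < A.+1 * w) ->
  (forall i, K <= i -> A * w <= x0 + i * l) ->
  \sum_(j < A.+1) \sum_(i < B) (x0 + i * l < j * w : nat)
    + \sum_(i < K) ((x0 + i * l) %/ w) = K * A.
Proof.
move=> KB below above; rewrite exchange_big (bigID (fun i : 'I_B => i < K)) /=.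
rewrite [X in _ + X + _]big1 => [|i]; last first.
  rewrite -leqNgt => /above Ai; apply: big1 => j _.
  by apply/eqP; rewrite eqb0 -leqNgt (leq_trans _ Ai) // leq_mul2r -ltnS ltn_ord orbT.
rewrite addn0 -(big_ord_widen _ (fun i => \sum_(j < A.+1) (x0 + i * l < j * w : nat)) KB).
rewrite -big_split -[K in K * A]card_ord -sum_nat_const; apply: eq_bigr => i _ /=.
have /below fA := ltn_ord i; have wpos : 0 < w by case: (posnP w) fA => // ->; rewrite muln0.
rewrite (eq_bigr (fun j : 'I_A.+1 => ((x0 + i * l) %/ w < j : nat))) => [|j _]; last first.
  by rewrite ltn_divLR.
by rewrite sum_ltn_ord subnK // -ltnS ltn_divLR.
Qed.

Section Delta0.

Variables (a b c l h w y th x0 y0 z0 : nat).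
Hypotheses (Ha : a = y * th) (Hb : b = l * th) (Hc : c + w * y = l * h).

Definition admissible j i :=
  [&& j * th <= z0, i * y <= y0 + j * h & j * w <= x0 + i * l].

Lemma admissible_sol j i : admissible j i ->
  (x0 + i * l - j * w) * a + (y0 + j * h - i * y) * b + (z0 - j * th) * c
  = x0 * a + y0 * b + z0 * c.
Proof.
case/and3P=> /subnK eZ /subnK eY /subnK eX.
have ejc : j * th * (c + w * y) = j * th * (l * h) by rewrite Hc.
move: (x0 + i * l - j * w) (y0 + j * h - i * y) (z0 - j * th) eX eY eZ => X Y Z eX eY eZ.
rewrite Ha Hb; nia.
Qed.

Hypotheses (ypos : 0 < y) (lpos : 0 < l) (thpos : 0 < th).

Local Notation A := (z0 %/ th).
Local Notation B := (y0 + A * h).+1.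

Lemma admissible_bounds j i : admissible j i -> j < A.+1 /\ i < B.
Proof.
case/and3P=> jz iy _; have jA : j <= A by rewrite leq_divRL.
have iiy : i <= i * y by rewrite leq_pmulr.
by split; [|move: (leq_mul2r h j A); rewrite jA orbT]; lia.
Qed.

Lemma sum_admissible :
  \sum_(j < A.+1) \sum_(i < B) admissible j i
    + \sum_(j < A.+1) \sum_(i < B) (x0 + i * l < j * w : nat)
  = A.+1 + \sum_(j < A.+1) ((y0 + j * h) %/ y).
Proof.
rewrite -big_split -[X in _ = X + _]card_ord -sum1_card -big_split.
apply: eq_bigr => j _ /=; have jA : j * th <= z0 by rewrite -leq_divRL // -ltnS.
have U_B : (y0 + j * h) %/ y < B.
  by rewrite ltnS (leq_trans (leq_div _ _)) // leq_add2l leq_mul2r -ltnS ltn_ord orbT.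
rewrite add1n -(sum_leq_ord U_B) -big_split; apply: eq_bigr => i _ /=.
rewrite /admissible jA leq_divRL //=; case: ltnP => [lt_w | ge_w]; last by rewrite andbT addn0.
suff -> : i * y <= y0 + j * h by rewrite andbF.
have : i * y * l < j * h * l by move: Hc lt_w; nia.
by rewrite ltn_pmul2r //; lia.
Qed.

Lemma k0_bounds k0 : z0 * w <= x0 * th + k0 * b -> x0 * th + k0 * b < z0 * w + b ->
  w < l ->
  [/\ k0 <= A.+1, forall i, i < k0 -> x0 + i * l < A.+1 * w
                & forall i, k0 <= i -> A * w <= x0 + i * l].
Proof.
move=> k0_lb k0_ub wl; have Az0 := leq_divM z0 th; have z0A := ltn_ceil z0 thpos.
split=> [|i ik0|i k0i].
- have : k0 * b < A.+2 * b by rewrite Hb; move: k0_ub; rewrite Hb; nia.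
  by rewrite ltn_pmul2r ?Hb ?muln_gt0 ?lpos.
- have : (x0 + i * l) * th < A.+1 * w * th by move: k0_ub; rewrite Hb; nia.
  by rewrite ltn_pmul2r.
- have : A * w * th <= (x0 + i * l) * th by move: k0_lb; rewrite Hb; nia.
  by rewrite leq_pmul2r.
Qed.

Section BasicFactorization.

Hypotheses (cpos : 0 < c) (coply : coprime l y) (copth : coprime th c) (x0l : x0 < l).
Hypothesis basic_min : forall s t,
  s * a + t * b = x0 * a + y0 * b %[mod c] -> x0 * a + y0 * b <= s * a + t * b.

Lemma sol_level X Y Z : X * a + Y * b + Z * c = x0 * a + y0 * b + z0 * c ->
  exists2 j, Z = z0 - j * th /\ j * th <= z0 &
    (X + j * w) * y + Y * l = x0 * y + (y0 + j * h) * l.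
Proof.
move=> E.
have /basic_min le_ab : X * a + Y * b = x0 * a + y0 * b %[mod c].
  by rewrite -(modnMDl Z) -(modnMDl z0 (x0 * a + _)); congr (_ %% c); lia.
have Zz0 : Z <= z0 by rewrite -(leq_pmul2r cpos); lia.
have key : th * (X * y + Y * l) = th * (x0 * y + y0 * l) + (z0 - Z) * c.
  by move: E le_ab; rewrite Ha Hb; nia.
have : th %| (z0 - Z) * c.
  by rewrite -(dvdn_addr _ (dvdn_mulr (x0 * y + y0 * l) (dvdnn th))) -key dvdn_mulr.
rewrite Gauss_dvdl // => /dvdnP[j Ej]; exists j; first lia.
have ejc : j * (c + w * y) = j * (l * h) by rewrite Hc.
apply/eqP; rewrite -(eqn_pmul2l thpos); apply/eqP; move: key; rewrite Ej; nia.
Qed.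

Lemma sol_admissible X Y Z : X * a + Y * b + Z * c = x0 * a + y0 * b + z0 * c ->
  exists j i, [/\ admissible j i, X = x0 + i * l - j * w,
                  Y = y0 + j * h - i * y & Z = z0 - j * th].
Proof.
case/sol_level=> j [EZ jz] E.
have Er : (X + j * w) %% l = x0.
  apply: (coprime_mod_mulr_inj coply) => //; first exact: ltn_pmod.
  rewrite modnMml -(modnMDl Y) -(modnMDl (y0 + j * h) (x0 * y)).
  by congr (_ %% l); lia.
set i := (X + j * w) %/ l; have Ei : X + j * w = i * l + x0 by rewrite -Er -divn_eq.
have Eiy : i * y + Y = y0 + j * h.
  by apply/eqP; rewrite -(eqn_pmul2r lpos); apply/eqP; move: E; rewrite Ei; nia.
by exists j, i; split; rewrite ?EZ //; first (apply/and3P; split); lia.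
Qed.

Lemma sol_indicator X Y Z :
  (X * a + Y * b + Z * c == x0 * a + y0 * b + z0 * c : nat) =
  \sum_(j < A.+1) \sum_(i < B) (admissible j i && (X == x0 + i * l - j * w)
                         && (Y == y0 + j * h - i * y) && (Z == z0 - j * th) : nat).
Proof.
pose Q j i := admissible j i && (X == x0 + i * l - j * w)
                && (Y == y0 + j * h - i * y) && (Z == z0 - j * th).
rewrite (eq_bigr (fun j : 'I_A.+1 => [exists i : 'I_B, Q j i] : nat)) => [|j _]; last first.
  apply: sum_nat_uniq => i i' /andP[/andP[/andP[/and3P[_ iy _] _] /eqP EY] _].
  move=> /andP[/andP[/andP[/and3P[_ i'y _] _] /eqP EY'] _].
  by apply/ord_inj/eqP; rewrite -(eqn_pmul2r ypos); apply/eqP; lia.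
rewrite sum_nat_uniq => [|j j']; last first.
  move=> /existsP[i /andP[/andP[/andP[/and3P[jz _ _] _] _] /eqP EZ]].
  move=> /existsP[i' /andP[/andP[/andP[/and3P[j'z _ _] _] _] /eqP EZ']].
  by apply/ord_inj/eqP; rewrite -(eqn_pmul2r thpos); apply/eqP; lia.
congr nat_of_bool.
apply/eqP/existsP => [/sol_admissible[j [i [adm EX EY EZ]]] | [j /existsP[i]]].
  have [jA iB] := admissible_bounds adm.
  by exists (Ordinal jA); apply/existsP; exists (Ordinal iB); rewrite /Q /= adm EX EY EZ !eqxx.
by case/andP=> /andP[/andP[/admissible_sol <- /eqP->] /eqP->] /eqP->.
Qed.

Lemma denumerant_admissible m : x0 * a + y0 * b + z0 * c = m ->
  denumerant a b c m = \sum_(j < A.+1) \sum_(i < B) admissible j i.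
Proof.
move=> Em; rewrite /denumerant.
under eq_bigr => X _ do under eq_bigr => Y _ do under eq_bigr => Z _ do
  rewrite -[n in _ == n]Em sol_indicator.
under eq_bigr => X _ do under eq_bigr => Y _ do rewrite exchange_big3.
under eq_bigr => X _ do rewrite exchange_big3.
rewrite exchange_big3; apply: eq_bigr => j _; apply: eq_bigr => i _.
rewrite sum_box_point; case adm: (admissible j i) => //=.
have apos : 0 < a by rewrite Ha muln_gt0 ypos.
have bpos : 0 < b by rewrite Hb muln_gt0 lpos.
have := admissible_sol adm; rewrite Em.
move: (x0 + i * l - j * w) (y0 + j * h - i * y) (z0 - j * th) => X Y Z Esol.
have := And3 (leq_pmulr X apos) (leq_pmulr Y bpos) (leq_pmulr Z cpos).
by rewrite !ltnS; clear -Esol; case; lia.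
Qed.

Lemma denumerant_closed_form k0 m :
  z0 * w <= x0 * th + k0 * b -> x0 * th + k0 * b < z0 * w + b ->
  w < l -> x0 * a + y0 * b + z0 * c = m ->
  ((denumerant a b c m)%:Z =
    (A.+1)%N%:Z * ((A.+1 + y0 %/ y)%N)%:Z + k0%:Z * ((x0 %/ w)%N%:Z - A%:Z)
     + ((h %/ y)%N%:Z - 2) * ((A * A.+1) %/ 2)%N%:Z
     + (l %/ w)%N%:Z * (((k0.-1 * k0) %/ 2)%N)%:Z
     + (\sum_(0 <= k < A.+1) ((y0 %% y + k * (h %% y)) %/ y))%N%:Z
     + (\sum_(0 <= k < k0) ((x0 %% w + k * (l %% w)) %/ w))%N%:Z)%R.
Proof.
move=> k0_lb k0_ub wl Em; have [k0A below above] := k0_bounds k0_lb k0_ub wl.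
have hpos : 0 < h by move: cpos Hc; case: h; rewrite ?muln0; lia.
have k0B : k0 <= B by rewrite (leq_trans k0A) // ltnS (leq_trans (leq_pmulr A hpos)) ?leq_addl.
have E1 := sum_admissible; have E2 := sum_ltn_affine_swap k0B below above.
rewrite -(denumerant_admissible Em) (sum_floor_affine _ y0 h) in E1.
rewrite (sum_floor_affine _ x0 l) in E2.
have /= TA := sum_ord_id_double A.+1.
rewrite -(sum_ord_id A.+1) -(sum_ord_id k0) !big_mkord.
move: E1 E2 TA; move: (\sum_(j < A.+1) \sum_(i < B) (x0 + i * l < j * w : nat)) => G.
move: (\sum_(i < A.+1) i) (\sum_(i < k0) i) => TA Tk0.
move: (\sum_(i < A.+1) (y0 %% y + i * (h %% y)) %/ y) => SY.
move: (\sum_(i < k0) (x0 %% w + i * (l %% w)) %/ w) => SX.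
move: (denumerant a b c m) (y0 %/ y) (h %/ y) (x0 %/ w) (l %/ w) => D y0b hb x0b lb.
clear; lia.
Qed.

End BasicFactorization.

End Delta0.

Lemma related_L_coprime a b c l h w y : 0 < c -> 0 < l -> y < h -> w < l ->
  related_L a b c l h w y -> l * a = y * b -> coprime l y.
Proof.
move=> cpos lpos yh wl [_ res_uniq _] Hla.
set g := gcdn l y; have gpos : 0 < g by rewrite gcdn_gt0 lpos.
case: (ltnP 1 g) => [g1|]; last by rewrite /coprime -/g; lia.
have [El Ey] : l = l %/ g * g /\ y = y %/ g * g by rewrite !divnK ?dvdn_gcdl ?dvdn_gcdr.
have l'pos : 0 < l %/ g by rewrite divn_gt0 // dvdn_leq ?dvdn_gcdl.
have Hla' : l %/ g * a = y %/ g * b.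
  by apply/eqP; rewrite -(eqn_pmul2r gpos) mulnAC -El mulnAC -Ey Hla.
have [i [j [_ _ U]]] := res_uniq _ (ltn_pmod (l %/ g * a) cpos).
have I1 : inL l h w y (l %/ g) 0 by rewrite /inL ltn_Pdiv ?(leq_ltn_trans _ yh) //=; lia.
have I2 : inL l h w y 0 (y %/ g) by rewrite /inL lpos (leq_ltn_trans (leq_div y g) yh) /=; lia.
have := U _ _ I1; rewrite mul0n addn0 => /(_ erefl) [Ei _].
have := U _ _ I2; rewrite mul0n add0n Hla' => /(_ erefl) [E0 _].
by move: l'pos; rewrite Ei -E0.
Qed.

Lemma delta0_theta a b c l h w y : 0 < c -> gcdn (gcdn a b) c = 1 -> 0 < y ->
  coprime l y -> l * h - w * y = c -> l * a = y * b ->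
  exists th, [/\ a = y * th, b = l * th, c + w * y = l * h, coprime th c
               & (h * b - w * a) %/ c = th].
Proof.
move=> cpos gcd1 ypos coply Hc Hla.
have Hc' : c + w * y = l * h by lia.
have cyl : coprime y l by rewrite coprime_sym.
have /dvdnP[th Ea] : y %| a by rewrite -(Gauss_dvdr a cyl) Hla dvdn_mulr.
have Hb : b = l * th by apply/eqP; rewrite -(eqn_pmul2l ypos) -Hla Ea; apply/eqP; ring.
exists th; split; rewrite ?(mulnC y) //.
  have gab : coprime (gcdn a b) c by apply/eqP.
  by apply: coprime_dvdl gab; rewrite dvdn_gcd Ea Hb dvdn_mulr ?dvdn_mull.
have -> : h * b = w * a + th * c by rewrite Ea Hb -[th * c]mulnC; nia.
by rewrite addKn mulnK.
Qed.

Local Open Scope ring_scope.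

(* [- ((- n) %/ b)%Z] is the ceiling of [n / b]. *)
Lemma ceilz_nat (p q b : nat) : (q < b)%N ->
  exists2 k : nat, - ((- (p%:Z - q%:Z)) %/ b%:Z)%Z = k%:Z & (p <= q + k * b < p + b)%N.
Proof.
move=> qb; have bpos : 0 < b%:Z by apply: leq_ltn_trans qb.
set k := - _; have /andP[le_pk lt_kp] : p%:Z - q%:Z <= k * b%:Z < p%:Z - q%:Z + b%:Z.
  have := divz_eq (- (p%:Z - q%:Z)) b%:Z; have := ltz_pmod (- (p%:Z - q%:Z)) bpos.
  by have := modz_ge0 (- (p%:Z - q%:Z)) (lt0r_neq0 bpos); rewrite /k; lia.
have k_ge0 : 0 <= k.
  have : -1 * b%:Z < k * b%:Z by lia.
  by rewrite ltr_pM2r //; lia.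
have [K EK] : exists K : nat, k = K%:Z by exists `|k|%N; rewrite abszE ger0_norm.
by exists K => //; rewrite EK in le_pk lt_kp; lia.
Qed.

Theorem theorem5 (a b c l h w y m x0 y0 z0 : nat) :
  (0 < a)%N -> (a < b)%N -> (b < c)%N -> gcdn (gcdn a b) c = 1%N ->
  (w < l)%N -> (y < h)%N ->
  related_L a b c l h w y ->
  (* delta = (l a - y b)/c = 0 *)
  (l * a = y * b)%N ->
  in_monoid a b c m ->
  (* basic factorization of m w.r.t. L(l,h,w,y) *)
  (x0 * a + y0 * b + z0 * c = m)%N -> inL l h w y x0 y0 ->
  let theta := ((h * b - w * a) %/ c)%N in
  let Am := (z0 %/ theta)%N in
  let y0b := (y0 %/ y)%N in let y0h := (y0 %% y)%N in
  let hb := (h %/ y)%N in let hh := (h %% y)%N in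
  let x0b := (x0 %/ w)%N in let x0h := (x0 %% w)%N in
  let lb := (l %/ w)%N in let lh := (l %% w)%N in
  let d : int := (denumerant a b c m)%:Z in
  let tri : int := ((Am * Am.+1) %/ 2)%N%:Z in
  let SY : int := (\sum_(0 <= k < Am.+1) ((y0h + k * hh) %/ y))%N%:Z in
  let F1 : int := (Am.+1)%N%:Z * ((Am.+1 + y0b)%N)%:Z + (hb%:Z - 2) * tri + SY in
  let k0 : int := - ((- ((z0 * w)%N%:Z - (x0 * theta)%N%:Z)) %/ b%:Z)%Z in
  ((w = 0)%N -> d = F1) /\
  ((0 < w)%N ->
     [/\ 0 <= k0,
         k0 = 0 -> d = F1,
         1 <= k0 <= Am%:Z ->
           d = (Am.+1)%N%:Z * ((Am.+1 + y0b)%N)%:Z + k0 * (x0b%:Z - Am%:Z)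
               + (hb%:Z - 2) * tri
               + lb%:Z * (((`|k0|%N.-1 * `|k0|%N) %/ 2)%N)%:Z
               + SY
               + (\sum_(0 <= k < `|k0|%N) ((x0h + k * lh) %/ w))%N%:Z
       & Am%:Z < k0 ->
           d = (Am.+1)%N%:Z * ((1 + x0b + y0b)%N)%:Z
               + ((lb + hb)%N%:Z - 2) * tri
               + (\sum_(0 <= k < Am.+1) ((x0h + k * lh) %/ w))%N%:Z
               + SY]).
Proof.
move=> apos ab bc gcd1 wl yh rel Hla _ Em inL0; have [Hc _ min_res] := rel.
have [lpos cpos] : (0 < l)%N /\ (0 < c)%N by lia.
have /andP[ypos bpos] : (0 < y)%N && (0 < b)%N by rewrite -muln_gt0 -Hla muln_gt0 lpos.
have coply := related_L_coprime cpos lpos yh wl rel Hla.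
have [th [Ha Hb Hc' copth ->]] := delta0_theta cpos gcd1 ypos coply Hc Hla.
have thpos : (0 < th)%N by move: apos; rewrite Ha muln_gt0 => /andP[].
have x0l : (x0 < l)%N by case/and3P: inL0.
have x0th_lt_b : (x0 * th < b)%N by rewrite Hb ltn_pmul2r.
cbv zeta; have [k0 -> /andP[k0_lb k0_ub]] := ceilz_nat (z0 * w) x0th_lt_b.
have [k0A _ _] := k0_bounds Ha Hb Hc' ypos lpos thpos k0_lb k0_ub wl.
rewrite absz_nat (denumerant_closed_form Ha Hb Hc' ypos lpos thpos cpos
  coply copth x0l (min_res _ _ inL0) k0_lb k0_ub wl Em).
have w0_k0 : w = 0%N -> k0 = 0%N.
  move=> w0; have : (k0 * b < 1 * b)%N by move: k0_ub; rewrite w0; lia.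
  by rewrite ltn_pmul2r // ltnS leqn0 => /eqP.
clear - w0_k0 k0A; split=> [/w0_k0 -> | _].
  by rewrite !big_mkord big_ord0 /= mul0n div0n; ring.
split=> [|[->]|//|Ak0] //.
  by rewrite !big_mkord big_ord0 /= mul0n div0n; ring.
have -> : k0 = (z0 %/ th).+1 by lia.
by rewrite !PoszD /=; ring.
Qed.
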